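(* Let $p$ be an odd prime, $\tau\in\mathbb{Z}$, and let $m=p^\alpha a$, $l=p^\beta b$ with positive integers $a,b$ such that $p\nmid a$, $p\nmid b$, and integers $\alpha\ge1$, $\beta\ge0$. Then $$p^{2\alpha}\ \Big|\ \binom{m}{l}\binom{m\tau+l-1}{m-1}-\binom{m/p}{l/p}\binom{\frac{m\tau+l}{p}-1}{\frac{m}{p}-1},$$ where, when $\beta=0$, the second term is defined to be zero.
   Context: For integers $b\geq 0$ and $a\in\mathbb{Z}$ the binomial coefficient is defined by: $\binom{a}{b}=1$ if $b=0$; $\binom{a}{b}$ is the usual binomial coefficient if $b\geq 1$ and $a\geq 0$; and $\binom{a}{b}=(-1)^b\binom{-a+b-1}{b}$ if $b\geq1$ and $a<0$. *)

From mathcomp Require Import all_boot all_order all_algebra.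
Set Implicit Arguments. Unset Strict Implicit. Unset Printing Implicit Defensive.
Import Order.TTheory GRing.Theory Num.Theory.
Local Open Scope ring_scope.

Definition binZ (x : int) (k : nat) : int :=
  if k == 0%N then 1
  else if 0 <= x then ('C(`|x|%N, k))%:Z
  else (-1) ^+ k * ('C((`|x| + k - 1)%N, k))%:Z.

From mathcomp Require Import all_boot all_order all_algebra.
From mathcomp Require Import zify ring.

(* Write m = pM, l = pL and m tau + l = pX.  Let G_n(y) = coprime_ffact p n y
   be the product of the y - i over 0 < i < pn prime to p, and
   D_n = G_n(pn) = coprime_fact p n, the p-free part of (pn-1)!.  Removing the
   multiples of p from the falling factorials gives the Lucas-type identities
   binom(pY-1, pn-1) D_n = binom(Y-1, n-1) G_n(pY).  As p is odd,
   G_n(0) = G_n(pn), so G_n(y) = D_n modulo y(y - pn).  Inserting this into the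
   identities for (Y, n) = (M, L) and (X, M), every error term carries p^2 and,
   by absorption, M^2; so m^2 divides D_L D_M times the difference.  When p does
   not divide l, absorption alone shows that m^2 divides l (m tau + l) times the
   first term.  In both cases the cofactor is prime to p. *)

Set Implicit Arguments.
Unset Strict Implicit.
Unset Printing Implicit Defensive.
Import Order.TTheory GRing.Theory Num.Theory.
Local Open Scope ring_scope.

Lemma binZ_nat (k n : nat) : binZ k%:Z n = 'C(k, n)%:Z.
Proof. by rewrite /binZ; case: n => //=; rewrite bin0. Qed.

Lemma binZ_Negz (k n : nat) : binZ (Negz k) n = (-1) ^+ n * 'C(k + n, n)%:Z.
Proof.
rewrite /binZ; case: n => [|n] /=; first by rewrite bin0 expr0 mulr1.
by rewrite addSn subn1.
Qed.

Lemma mul_binZ_absorb (w : int) (n : nat) :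
  n.+1%:Z * binZ w n.+1 = w * binZ (w - 1) n.
Proof.
case: w => k.
- case: k => [|k]; first by rewrite binZ_nat bin0n mulr0 mul0r.
  have -> : Posz k.+1 - 1 = Posz k by rewrite subzn // subn1.
  by rewrite !binZ_nat -!PoszM -mul_bin_diag.
- have -> : Negz k - 1 = Negz k.+1 by rewrite !NegzE; lia.
  rewrite !binZ_Negz NegzE exprS mulN1r !mulNr mulrN.
  rewrite addnS -addSn; congr (- _).
  have := mul_bin_left (k.+1 + n) n; rewrite addnK => /(congr1 Posz).
  by rewrite !PoszM mulrCA => ->; rewrite mulrCA.
Qed.

Lemma binZ_ffact (w : int) (n : nat) :
  binZ w n * n`!%:Z = \prod_(0 <= i < n) (w - i%:Z).
Proof.
elim: n w => [|n IHn] w; first by rewrite big_geq // mul1r.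
rewrite factS PoszM mulrCA mulrA mul_binZ_absorb -mulrA IHn.
rewrite big_nat_recl //= subr0; congr (_ * _).
by apply: eq_bigr => i _; lia.
Qed.

Lemma mul_binZ_left (w : int) (n : nat) :
  n.+1%:Z * binZ w n.+1 = (w - n%:Z) * binZ w n.
Proof.
have fact_neq0 : n`!%:Z != 0 by rewrite eqz_nat -lt0n fact_gt0.
have := binZ_ffact w n.+1.
rewrite big_nat_recr //= -binZ_ffact factS PoszM => ffact_rec.
by apply: (mulIf fact_neq0); rewrite -mulrA mulrCA ffact_rec mulrC mulrA.
Qed.

Lemma binZ_pred_ffact (w : int) (n : nat) :
  binZ (w - 1) n * n`!%:Z = \prod_(1 <= i < n.+1) (w - i%:Z).
Proof. by rewrite binZ_ffact big_add1 /=; apply: eq_bigr => i _; lia. Qed.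

Lemma sqr_dvdz_binZ_mul (m l : nat) (x : int) : (0 < m)%N -> (0 < l)%N ->
  ((m * m)%N%:Z %| l%:Z * x * (binZ m%:Z l * binZ (x - 1) (m - 1)))%Z.
Proof.
move=> m_gt0 l_gt0.
have := mul_binZ_absorb m%:Z l.-1; rewrite prednK // => absorb_l.
have := mul_binZ_absorb x m.-1; rewrite prednK // -subn1 => absorb_m.
by rewrite mulrACA absorb_l -absorb_m mulrACA PoszM dvdz_mulr.
Qed.

Lemma prod_nat_dvdn_split (T : comPzSemiRingType) (p n : nat) (F : nat -> T) :
  (0 < p)%N ->
  \prod_(1 <= i < p * n) F i
  = \prod_(1 <= j < n) F (p * j)%N * \prod_(1 <= i < p * n | ~~ (p %| i)%N) F i.
Proof.
move=> p_gt0; rewrite (bigID (dvdn p)) /=; congr (_ * _).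
case: n => [|n]; first by rewrite muln0 !big_geq.
have no_multiple m : (p %| m)%N -> \prod_(m.+1 <= i < m + p | (p %| i)%N) F i = 1.
  move=> dvd_pm; rewrite big_nat_cond big1 // => i /andP[/andP[lt_mi lt_ip] dvd_pi].
  have: (p %| i - m)%N by rewrite dvdn_sub.
  by rewrite gtnNdvd // ?subn_gt0 // ltn_subLR // ltnW.
elim: n => [|n IHn].
  by rewrite muln1 [RHS]big_geq // -{1}[p]add0n no_multiple ?dvdn0.
rewrite mulnS addnC (big_cat_nat _ (n := p * n.+1)) ?leq_addr ?muln_gt0 ?p_gt0 //.
have lt_block : (p * n.+1 < p * n.+1 + p)%N by lia.
rewrite (big_ltn_cond (m := p * n.+1)) //= dvdn_mulr // no_multiple ?dvdn_mulr //.
by rewrite mulr1 IHn [RHS]big_nat_recr.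
Qed.

Lemma horner_eq_factor (R : idomainType) (P : {poly R}) (a c y : R) :
  a != c -> P.[a] = P.[c] -> exists k, P.[y] - P.[a] = (y - a) * (y - c) * k.
Proof.
move=> neq_ac Pac.
have /factor_theorem[q Pq] : root (P - P.[a]%:P) a by rewrite /root !hornerE subrr.
have /factor_theorem[r qr] : root q c.
  have : (P - P.[a]%:P).[c] = 0 by rewrite !hornerE Pac subrr.
  rewrite Pq hornerM hornerXsubC => /eqP.
  by rewrite mulf_eq0 subr_eq0 [c == a]eq_sym (negbTE neq_ac) orbF.
exists r.[y]; have := congr1 (horner^~ y) Pq.
by rewrite qr !hornerE => ->; rewrite mulrC [r.[y] * _]mulrC mulrA.
Qed.

Definition coprime_fact (p n : nat) : int :=
  \prod_(1 <= i < p * n | ~~ (p %| i)%N) i%:Z.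

Definition coprime_ffact (p n : nat) (y : int) : int :=
  \prod_(1 <= i < p * n | ~~ (p %| i)%N) (y - i%:Z).

Section CoprimeFactorial.

Variable p : nat.
Hypothesis p_gt0 : (0 < p)%N.

Lemma coprime_ffact_pmul (n : nat) : coprime_ffact p n (p * n)%N%:Z = coprime_fact p n.
Proof.
rewrite /coprime_ffact big_nat_rev add1n /= big_nat_cond [RHS]big_nat_cond.
apply: eq_big => [i | i /andP[/andP[_ lt_i_pn] _]].
  by apply: andb_id2l => /andP[_ lt_i_pn]; rewrite subSS dvdn_subr ?dvdn_mulr // ltnW.
by rewrite subSS subzn ?leq_subr // subKn // ltnW.
Qed.

Lemma coprime_ffact0 (n : nat) : odd p -> coprime_ffact p n 0 = coprime_fact p n.
Proof.
move=> p_odd.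
have sign_even : \prod_(1 <= i < p * n | ~~ (p %| i)%N) (-1 : int) = 1.
  case: n => [|n]; first by rewrite muln0 big_geq.
  (* There are (p - 1) n factors: compare the constant products in the split. *)
  have := prod_nat_dvdn_split n.+1 (fun=> -1 : int) p_gt0.
  rewrite !prodr_const_nat -signr_odd oddB ?muln_gt0 ?p_gt0 // oddM p_odd /=.
  rewrite addbT negbK signr_odd subn1 /= => sign_eq.
  by rewrite -(signrMK n (\prod_(_ <= _ < _ | _) _)) -sign_eq -expr2 sqrr_sign.
rewrite /coprime_ffact /coprime_fact.
under eq_bigr do rewrite sub0r -mulN1r.
by rewrite big_split /= sign_even mul1r.
Qed.

Lemma coprime_ffact_congr (n : nat) (y : int) : odd p -> (0 < n)%N ->
  exists k, coprime_ffact p n y - coprime_fact p n = y * (y - (p * n)%N%:Z) * k.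
Proof.
move=> p_odd n_gt0.
pose P : {poly int} := \prod_(1 <= i < p * n | ~~ (p %| i)%N) ('X - i%:Z%:P).
have PE z : P.[z] = coprime_ffact p n z.
  by rewrite horner_prod; apply: eq_bigr => i _; rewrite hornerXsubC.
have pn_neq0 : 0 != (p * n)%N%:Z by rewrite eq_sym eqz_nat muln_eq0 negb_or -!lt0n p_gt0.
have [|k Pk] := horner_eq_factor (P := P) y pn_neq0.
  by rewrite !PE coprime_ffact0 // coprime_ffact_pmul.
by exists k; rewrite -(coprime_ffact0 n p_odd) -!PE Pk subr0.
Qed.

Lemma binZ_pmul_pred (Y : int) (n : nat) : (0 < n)%N ->
  binZ (p%:Z * Y - 1) (p * n - 1) * coprime_fact p n
  = binZ (Y - 1) (n - 1) * coprime_ffact p n (p%:Z * Y).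
Proof.
move=> n_gt0; have pn_gt0 : (0 < p * n)%N by rewrite muln_gt0 p_gt0.
set K := p%:Z ^+ (n - 1) * (n - 1)`!%:Z.
have ffact_split (w : int) : binZ (p%:Z * w - 1) (p * n - 1) * (p * n - 1)`!%:Z
    = K * binZ (w - 1) (n - 1) * coprime_ffact p n (p%:Z * w).
  have multiples : \prod_(1 <= j < n) (p%:Z * w - (p * j)%N%:Z)
      = p%:Z ^+ (n - 1) * (binZ (w - 1) (n - 1) * (n - 1)`!%:Z).
    rewrite -prodr_const_nat binZ_pred_ffact subn1 prednK // -big_split /=.
    by apply: eq_bigr => j _; rewrite PoszM mulrBr.
  rewrite binZ_pred_ffact subn1 prednK // prod_nat_dvdn_split //.
  by rewrite multiples /K [binZ _ _ * _]mulrC !mulrA.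
have fact_split : (p * n - 1)`!%:Z = K * coprime_fact p n.
  have := ffact_split n%:Z.
  by rewrite -PoszM !subzn // !binZ_nat !binn mul1r mulr1 coprime_ffact_pmul.
have K_neq0 : K != 0 by rewrite mulf_neq0 ?expf_neq0 // eqz_nat -lt0n ?fact_gt0.
apply: (mulIf K_neq0).
by rewrite -mulrA [coprime_fact p n * K]mulrC -fact_split ffact_split -mulrA mulrC.
Qed.

Lemma binZ_pmul (Y : int) (n : nat) : (0 < n)%N ->
  binZ (p%:Z * Y) (p * n) * coprime_fact p n = binZ Y n * coprime_ffact p n (p%:Z * Y).
Proof.
move=> n_gt0; have pn_gt0 : (0 < p * n)%N by rewrite muln_gt0 p_gt0.
have pn_neq0 : (p * n)%N%:Z != 0 by rewrite eqz_nat -lt0n.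
have := mul_binZ_absorb (p%:Z * Y) (p * n).-1; rewrite prednK // -subn1 => absorb_pn.
have := mul_binZ_absorb Y n.-1; rewrite prednK // -subn1 => absorb_n.
apply: (mulfI pn_neq0).
rewrite mulrA absorb_pn -!mulrA binZ_pmul_pred // PoszM -mulrA [n%:Z * _]mulrA absorb_n.
by rewrite !mulrA.
Qed.

Lemma sqr_dvdz_binZ_pmul_sub (M L : nat) (X : int) : odd p ->
  (0 < M)%N -> (0 < L)%N -> (M%:Z %| X - L%:Z)%Z ->
  ((p * M * (p * M))%N%:Z %| coprime_fact p L * coprime_fact p M *
     (binZ (p * M)%N%:Z (p * L) * binZ (p%:Z * X - 1) (p * M - 1)
      - binZ M%:Z L * binZ (X - 1) (M - 1)))%Z.
Proof.
move=> p_odd M_gt0 L_gt0 /dvdzP[tau X_L].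
set b := binZ M%:Z L; set B := binZ (X - 1) (M - 1).
set DL := coprime_fact p L; set DM := coprime_fact p M.
have [k1 congr_L] := coprime_ffact_congr (p%:Z * M%:Z) p_odd L_gt0.
have [k2 congr_M] := coprime_ffact_congr (p%:Z * X) p_odd M_gt0.
set GL := coprime_ffact p L _ in congr_L; set GM := coprime_ffact p M _ in congr_M.
have lucas_L : binZ (p * M)%N%:Z (p * L) * DL = b * GL by rewrite PoszM binZ_pmul.
have lucas_M : binZ (p%:Z * X - 1) (p * M - 1) * DM = B * GM by rewrite binZ_pmul_pred.
have absorb_b : (M%:Z - L%:Z) * b = M%:Z * binZ (M%:Z - 1) L.
  by rewrite -mul_binZ_left mul_binZ_absorb.
have shift_b : X * b = M%:Z * (tau * b + binZ (M%:Z - 1) (L - 1)).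
  have := mul_binZ_absorb M%:Z L.-1; rewrite prednK // -subn1 => absorb_L.
  by rewrite -(subrK L%:Z X) X_L mulrDl absorb_L mulrDr mulrA [tau * _]mulrC.
have absorb_B : (X - M%:Z) * B = M%:Z * binZ (X - 1) M.
  have := mul_binZ_left (X - 1) M.-1; rewrite prednK // -subn1 => ->.
  by congr (_ * _); lia.
have -> : DL * DM * (binZ (p * M)%N%:Z (p * L) * binZ (p%:Z * X - 1) (p * M - 1) - b * B)
          = b * B * ((GL - DL) * GM + DL * (GM - DM)).
  transitivity ((binZ (p * M)%N%:Z (p * L) * DL) * (binZ (p%:Z * X - 1) (p * M - 1) * DM)
                - DL * DM * (b * B)); first by ring.
  by rewrite lucas_L lucas_M; ring.
rewrite congr_L congr_M !PoszM; apply/dvdzP.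
exists (k1 * GM * B * binZ (M%:Z - 1) L
        + DL * k2 * (tau * b + binZ (M%:Z - 1) (L - 1)) * binZ (X - 1) M).
transitivity (p%:Z ^+ 2 * (M%:Z * k1 * GM * B * ((M%:Z - L%:Z) * b)
                           + DL * k2 * (X * b) * ((X - M%:Z) * B))); first by ring.
by rewrite absorb_b shift_b absorb_B; ring.
Qed.

End CoprimeFactorial.

Lemma coprimez_pexpl (p k : nat) (x : int) :
  prime p -> ~~ (p%:Z %| x)%Z -> coprimez (p ^ k)%N%:Z x.
Proof. by move=> p_prime; rewrite coprimezE dvdzE /= -prime_coprime // => /coprimeXl. Qed.

Lemma coprimez_coprime_fact (p k n : nat) :
  prime p -> coprimez (p ^ k)%N%:Z (coprime_fact p n).
Proof.
move=> p_prime; apply: (big_ind (coprimez (p ^ k)%N%:Z)) => [|x y|i p_ndvd_i].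
- by rewrite coprimezE coprimen1.
- by rewrite coprimezMr => -> ->.
- by apply: coprimez_pexpl; rewrite // dvdzE.
Qed.

Theorem lemma3p2 (p : nat) (tau : int) (a b alpha beta : nat) :
  prime p -> odd p -> (0 < a)%N -> (0 < b)%N ->
  ~~ (p %| a)%N -> ~~ (p %| b)%N -> (1 <= alpha)%N ->
  let m := (p ^ alpha * a)%N in
  let l := (p ^ beta * b)%N in
  ((p ^ (2 * alpha))%N%:Z %|
     binZ m%:Z l * binZ (m%:Z * tau + l%:Z - 1) (m - 1)%N
     - (if beta == 0%N then 0
        else binZ (m %/ p)%N%:Z (l %/ p)%N
             * binZ (divz (m%:Z * tau + l%:Z) p%:Z - 1) (m %/ p - 1)%N))%Z.
Proof.
move=> p_prime p_odd a_gt0 b_gt0 p_ndvd_a p_ndvd_b alpha_gt0 /=.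
set m := (p ^ alpha * a)%N; set l := (p ^ beta * b)%N.
have p_gt0 := prime_gt0 p_prime.
set M := (p ^ alpha.-1 * a)%N.
have m_pM : m = (p * M)%N by rewrite /m /M mulnA -expnS prednK.
have M_gt0 : (0 < M)%N by rewrite muln_gt0 expn_gt0 p_gt0.
have dvd_m2 : (p ^ (2 * alpha) %| m * m)%N by rewrite mulnn expnMn -expnM mulnC dvdn_mulr.
case: beta @l => [|beta] l /=.
- have l_b : l = b by rewrite /l mul1n.
  have coprime_lx : coprimez (p ^ (2 * alpha))%N%:Z (l%:Z * (m%:Z * tau + l%:Z)).
    rewrite coprimezMr !coprimez_pexpl //; last by rewrite dvdzE l_b.
    by rewrite m_pM PoszM -mulrA rpredDl ?dvdz_mulr // dvdzE l_b.
  rewrite subr0 -(Gauss_dvdzr _ coprime_lx).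
  apply: dvdz_trans (sqr_dvdz_binZ_mul _ _ _) => //; last by rewrite l_b.
  by rewrite m_pM muln_gt0 p_gt0.
set L := (p ^ beta * b)%N.
have l_pL : l = (p * L)%N by rewrite /l /L mulnA -expnS.
have L_gt0 : (0 < L)%N by rewrite muln_gt0 expn_gt0 p_gt0.
have p_neq0 : p%:Z != 0 by rewrite eqz_nat -lt0n.
have -> : m%:Z * tau + l%:Z = p%:Z * (M%:Z * tau + L%:Z).
  by rewrite m_pM l_pL !(PoszM p) mulrDr mulrA.
have coprime_D : coprimez (p ^ (2 * alpha))%N%:Z (coprime_fact p L * coprime_fact p M).
  by rewrite coprimezMr !coprimez_coprime_fact.
rewrite mulKz // m_pM l_pL !mulKn // -(Gauss_dvdzr _ coprime_D).
apply: dvdz_trans (sqr_dvdz_binZ_pmul_sub p_gt0 p_odd M_gt0 L_gt0 _); last first.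
  by rewrite addrK dvdz_mulr.
by rewrite dvdzE -m_pM.
Qed.
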